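(* Let $\rho\in\{1/2,1\}$, let $s>0$ and $\eta>0$ be real numbers, let $q\in\mathbb{C}$, and let $\epsilon$ be real with $1<\epsilon\le 1+\rho$. Define the real cubic polynomial $$f(\gamma) = -\gamma^3\eta s^2 - \gamma^2\big[(1-\epsilon+\rho)s^2 + 2\eta s\big] + \gamma\big[2(\epsilon-1)s - s\rho + \rho|q|^2 - \eta\big] + (\epsilon-1).$$ Then $f$ has a positive root of multiplicity one or three (and no other positive root).
   Context: The polynomial $f$ satisfies $f(\gamma)=\gamma(1+\gamma s)^2\ell'(\gamma)$, where $\ell(\gamma) = -\rho\log(1+\gamma s) + \rho|q|^2/(\gamma^{-1}+s) + (\epsilon-1)\log\gamma - \eta\gamma$ for $\gamma>0$. Here $\rho=1/2$ corresponds to a real and $\rho=1$ to a complex signal model, $\epsilon$ is a gamma shape parameter and $\eta>0$ a gamma rate parameter. *)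

From mathcomp Require Import all_boot all_order all_algebra.
From mathcomp Require Import complex.
Set Implicit Arguments. Unset Strict Implicit. Unset Printing Implicit Defensive.
Import Order.TTheory GRing.Theory Num.Theory.
Local Open Scope ring_scope.

Definition sqnorm (R : rcfType) (q : R[i]) : R := (Normc.normc q) ^+ 2.

Definition fpoly (R : rcfType) (rho s eta eps : R) (q : R[i]) : {poly R} :=
  - (eta * s ^+ 2)%:P * 'X^3
  - ((1 - eps + rho) * s ^+ 2 + 2 * eta * s)%:P * 'X^2
  + (2 * (eps - 1) * s - s * rho + rho * sqnorm q - eta)%:P * 'X
  + (eps - 1)%:P.

From mathcomp Require Import all_boot all_order all_algebra.
From mathcomp Require Import complex.
From mathcomp Require Import ring lra.
Set Implicit Arguments. Unset Strict Implicit. Unset Printing Implicit Defensive.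
Import Order.TTheory GRing.Theory Num.Theory.
Local Open Scope ring_scope.

(* Write f = -a X^3 - b X^2 + c X + d; the hypotheses give a > 0, b >= 0 and d > 0 (only
   1 < eps <= 1 + rho is used, not rho in {1/2, 1}).  Then f(g)/g = -a g^2 - b g + c + d/g is
   strictly decreasing on (0, oo), so f has at most one positive root, and it has one since
   f(0) > 0 > f(oo).  At a positive root g f'(g) = -(2 a g^3 + b g^2 + d) < 0, so the root is
   simple: multiplicity three never occurs. *)

Lemma mup_simple_root (F : fieldType) (p : {poly F}) x :
  root p x -> p^`().[x] != 0 -> mup x p = 1%N.
Proof.
move=> /factor_theorem [r ->].
rewrite derivM derivXsubC !hornerE subrr mulr0 add0r => rx_neq0.
have rx : ~~ root r x by rewrite /root.
by rewrite mupMr // -[_ - _]expr1 mup_XsubCX eqxx.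
Qed.

Section NegativeCubic.
Variable R : rcfType.
Variables a b c d : R.

Definition neg_cubic : {poly R} := - a%:P * 'X^3 - b%:P * 'X^2 + c%:P * 'X + d%:P.

Lemma horner_neg_cubic (x : R) : neg_cubic.[x] = - a * x ^+ 3 - b * x ^+ 2 + c * x + d.
Proof. by rewrite /neg_cubic !hornerE. Qed.

Lemma horner_deriv_neg_cubic (x : R) :
  x * neg_cubic^`().[x] = neg_cubic.[x] - (2 * a * x ^+ 3 + b * x ^+ 2 + d).
Proof. rewrite horner_neg_cubic /neg_cubic !derivE !hornerE /=; ring. Qed.

Lemma neg_cubic_cross (x y : R) :
  y * neg_cubic.[x] - x * neg_cubic.[y] = (y - x) * (a * x * y * (x + y) + b * x * y + d).
Proof. rewrite !horner_neg_cubic; ring. Qed.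

Hypotheses (a_gt0 : 0 < a) (b_ge0 : 0 <= b) (d_gt0 : 0 < d).

Lemma neg_cubic_pos_root_uniq (x y : R) :
  0 < x -> 0 < y -> root neg_cubic x -> root neg_cubic y -> x = y.
Proof.
move=> x_gt0 y_gt0 /eqP px /eqP py.
have : (y - x) * (a * x * y * (x + y) + b * x * y + d) = 0.
  by rewrite -neg_cubic_cross px py !mulr0 subr0.
have : 0 < a * x * y * (x + y) + b * x * y + d.
  have axy : 0 < a * x * y * (x + y) by rewrite !mulr_gt0 ?addr_gt0.
  have bxy : 0 <= b * x * y by rewrite !mulr_ge0 // ltW.
  exact: ltr_wpDl (addr_ge0 (ltW axy) bxy) d_gt0.
by move=> /gt_eqF pos_neq0 /eqP; rewrite mulf_eq0 pos_neq0 orbF subr_eq0 => /eqP ->.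
Qed.

Lemma neg_cubic_lt0 : neg_cubic.[1 + (`|c| + d) / a] < 0.
Proof.
set M := 1 + (`|c| + d) / a.
(* a (M - 1) >= |c| + d gives f(M) <= -a M ((M - 1)^2 + M). *)
have M_ge1 : 1 <= M by rewrite lerDl divr_ge0 ?addr_ge0 // ltW.
have M_gt0 : 0 < M := lt_le_trans ltr01 M_ge1.
have aM : `|c| + d <= a * (M - 1).
  by rewrite /M addrAC subrr add0r mulrCA divff ?gt_eqF ?mulr1.
have aMM : (`|c| + d) * M <= a * (M - 1) * M by rewrite ler_pM2r.
have cM : c * M <= `|c| * M by rewrite ler_pM2r ?real_ler_norm ?num_real.
have dM : d <= d * M by rewrite ler_peMr // ltW.
have bM : 0 <= b * M ^+ 2 by rewrite mulr_ge0 ?exprn_ge0 // ltW.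
have aM3 : 0 < a * M * ((M - 1) ^+ 2 + M) by rewrite !mulr_gt0 // ltr_wpDl // sqr_ge0.
rewrite horner_neg_cubic; lra.
Qed.

Lemma neg_cubic_has_pos_root : exists2 x, 0 < x & root neg_cubic x.
Proof.
have p0 : neg_cubic.[0] = d by rewrite horner_neg_cubic; ring.
have [||x /andP[x_ge0 _] rx] := @poly_ivt _ (- neg_cubic) 0 (1 + (`|c| + d) / a).
- by rewrite ler_wpDl ?divr_ge0 ?addr_ge0 // ltW.
- by rewrite !hornerN p0 oppr_le0 oppr_ge0 (ltW d_gt0) (ltW neg_cubic_lt0).
- rewrite rootN in rx; exists x => //.
  by rewrite lt_neqAle x_ge0 andbT; apply: contraTneq rx => <-; rewrite /root p0 gt_eqF.
Qed.

Lemma deriv_neg_cubic_pos_root (x : R) : 0 < x -> root neg_cubic x -> neg_cubic^`().[x] < 0.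
Proof.
move=> x_gt0 /eqP px.
have : x * neg_cubic^`().[x] < 0.
  by rewrite horner_deriv_neg_cubic px sub0r oppr_lt0 ltr_wpDl // addr_ge0 ?mulr_ge0 ?exprn_ge0 // ltW.
by rewrite pmulr_rlt0.
Qed.

Lemma neg_cubic_unique_simple_pos_root :
  exists g, [/\ 0 < g, root neg_cubic g, mup g neg_cubic = 1%N
    & forall x, 0 < x -> root neg_cubic x -> x = g].
Proof.
have [g g_gt0 rg] := neg_cubic_has_pos_root.
exists g; split => //.
- by rewrite mup_simple_root // lt_eqF // deriv_neg_cubic_pos_root.
- by move=> x x_gt0 rx; apply: neg_cubic_pos_root_uniq.
Qed.

End NegativeCubic.

Lemma fpoly_neg_cubic (R : rcfType) (rho s eta eps : R) (q : R[i]) :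
  fpoly rho s eta eps q = neg_cubic (eta * s ^+ 2)
    ((1 - eps + rho) * s ^+ 2 + 2 * eta * s)
    (2 * (eps - 1) * s - s * rho + rho * sqnorm q - eta) (eps - 1).
Proof. by rewrite /fpoly /neg_cubic !mulNr. Qed.

Theorem lemma2 (R : rcfType) (rho s eta eps : R) (q : R[i]) :
  (rho = 2^-1 \/ rho = 1) -> 0 < s -> 0 < eta -> 1 < eps -> eps <= 1 + rho ->
  exists g : R, [/\ 0 < g, root (fpoly rho s eta eps q) g,
    (mup g (fpoly rho s eta eps q) = 1%N \/ mup g (fpoly rho s eta eps q) = 3%N)
    & forall x : R, 0 < x -> root (fpoly rho s eta eps q) x -> x = g].
Proof.
move=> _ s_gt0 eta_gt0 eps_gt1 eps_le.
have lead_gt0 : 0 < eta * s ^+ 2 by rewrite mulr_gt0 ?exprn_gt0.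
have quad_ge0 : 0 <= (1 - eps + rho) * s ^+ 2 + 2 * eta * s.
  have coef_ge0 : 0 <= 1 - eps + rho by rewrite addrAC subr_ge0.
  by rewrite addr_ge0 ?mulr_ge0 ?exprn_ge0 // ltW.
have const_gt0 : 0 < eps - 1 by rewrite subr_gt0.
rewrite fpoly_neg_cubic.
have [g [g_gt0 rg mup_g uniq_g]] := neg_cubic_unique_simple_pos_root
  (2 * (eps - 1) * s - s * rho + rho * sqnorm q - eta) lead_gt0 quad_ge0 const_gt0.
by exists g; split; [| | left |].
Qed.
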